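(* Let $X$ be a compact metric space containing a free topological $n$-ball with $n\ge 2$. Then there exists a homeomorphism $f$ of $X$ onto itself and a point $x\in X$ such that $\omega_f(x)$ is infinite and consists of fixed points of $f$. In particular, $X$ does not have the $\omega$-FTP property.
   Context: $B_n=\{x\in\mathbb{R}^n:\|x\|\le1\}$ with Euclidean norm, $\mathrm{int}(B_n)=\{\|x\|<1\}$. A topological $n$-ball is a space homeomorphic to $B_n$; a topological $n$-ball $B\subset X$ is free in $X$ if $h(\mathrm{int}(B_n))$ is open in $X$ for a homeomorphism $h:B_n\to B$. For continuous $f:X\to X$, $\omega_f(x)=\{y:\ \exists\, n_i\to+\infty,\ f^{n_i}(x)\to y\}$, totally periodic if all its points are periodic. $X$ has the $\omega$-FTP property if for every continuous $f:X\to X$, every totally periodic $\omega$-limit set is finite. *)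

From HB Require Import structures.
From mathcomp Require Import all_boot all_order all_algebra.
From mathcomp Require Import all_classical all_reals all_analysis.
Set Implicit Arguments. Unset Strict Implicit. Unset Printing Implicit Defensive.
Import Order.TTheory GRing.Theory Num.Theory.
Import numFieldNormedType.Exports.
Local Open Scope classical_set_scope.
Local Open Scope ring_scope.

(* Euclidean closed unit ball B_n and its interior in R^n = 'rV[R]_n.
   The (product) topology of 'rV[R]_n is the Euclidean topology. *)
Definition sqnorm {R : realType} {n : nat} (x : 'rV[R]_n) : R :=
  \sum_(i < n) x ord0 i ^+ 2.

Definition closed_ball_n (R : realType) (n : nat) : set 'rV[R]_n :=
  [set x | Num.sqrt (sqnorm x) <= 1].
Arguments closed_ball_n : clear implicits.

Definition open_ball_n (R : realType) (n : nat) : set 'rV[R]_n :=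
  [set x | Num.sqrt (sqnorm x) < 1].
Arguments open_ball_n : clear implicits.

Definition homeo_onto {R : realType} {n : nat} {X : topologicalType}
  (h : 'rV[R]_n -> X) (B : set X) : Prop :=
  exists g : X -> 'rV[R]_n,
    [/\ {within closed_ball_n R n, continuous h},
        {within B, continuous g},
        h @` closed_ball_n R n = B /\ g @` B `<=` closed_ball_n R n,
        (forall x, closed_ball_n R n x -> g (h x) = x) &
        (forall y, B y -> h (g y) = y)].

Arguments homeo_onto {R n X} h B.

Definition top_ball (R : realType) (n : nat) {X : topologicalType} (B : set X) : Prop :=
  exists h : 'rV[R]_n -> X, homeo_onto h B.

Arguments top_ball R n {X} B.

Definition free_ball (R : realType) (n : nat) {X : topologicalType} (B : set X) : Prop :=
  exists h : 'rV[R]_n -> X, homeo_onto h B /\ open (h @` open_ball_n R n).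

Arguments free_ball R n {X} B.

Definition self_homeo {X : topologicalType} (f : X -> X) : Prop :=
  exists g : X -> X, [/\ continuous f, continuous g, cancel f g & cancel g f].

Definition omega_lim {X : topologicalType} (f : X -> X) (x : X) : set X :=
  [set y | exists phi : nat -> nat,
      (forall N, exists M, forall i, (M <= i)%N -> (N <= phi i)%N) /\
      ((fun i => iter (phi i) f x) @ \oo --> y)].

Definition periodic_pt {X : Type} (f : X -> X) (y : X) : Prop :=
  exists k, (0 < k)%N /\ iter k f y = y.

Definition omega_FTP (X : topologicalType) : Prop :=
  forall f : X -> X, continuous f -> forall x : X,
    (forall y, omega_lim f x y -> periodic_pt f y) -> finite_set (omega_lim f x).

From HB Require Import structures.
From mathcomp Require Import all_boot all_order all_algebra.
From mathcomp Require Import all_classical all_reals all_analysis.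
From mathcomp Require Import ring lra zify.
Set Implicit Arguments. Unset Strict Implicit. Unset Printing Implicit Defensive.
Import Order.TTheory GRing.Theory Num.Theory.
Import numFieldNormedType.Exports.
Local Open Scope classical_set_scope.
Local Open Scope ring_scope.

(* Inside the ball, a map twisting each sphere of radius r by an angle depending
   on r and pushing the annulus 1/4 <= r <= 1/2 outwards, while fixing every
   point of norm >= 1/2, is transplanted to X through the free ball and extended
   by the identity; this is a homeomorphism of X. A suitable orbit has radii
   increasing to 1/2 and polar angles 2 pi sqrt(k+1). Since the angle increments
   tend to 0 while the angles are unbounded, along the indices
   (q(m+1))^2 + 2m + 1 the angles tend to 2 pi / q modulo 2 pi. So the
   omega-limit set contains infinitely many points of the sphere of radius 1/2,
   and all of its points lie on that sphere, where the map is the identity. *)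

Lemma ler_pdiv2 (F : numFieldType) (a b c d : F) :
  0 < b -> 0 < d -> (a / b <= c / d) = (a * d <= c * b).
Proof. by move=> b0 d0; rewrite ler_pdivrMr // mulrAC ler_pdivlMr. Qed.

Section ShiftOnUnitInterval.
Variable R : realType.
Implicit Types u v x : R.

Definition clamp01 x : R := Num.min 1 (Num.max 0 x).

Lemma clamp01_le0 x : x <= 0 -> clamp01 x = 0.
Proof. by move=> x0; rewrite /clamp01 (max_idPl x0) (min_idPr ler01). Qed.

Lemma clamp01_ge1 x : 1 <= x -> clamp01 x = 1.
Proof.
move=> x1; have x0 : 0 <= x by apply: le_trans x1.
by rewrite /clamp01 (max_idPr x0) (min_idPl x1).
Qed.

Lemma clamp01_id x : 0 <= x <= 1 -> clamp01 x = x.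
Proof. by case/andP=> x0 x1; rewrite /clamp01 (max_idPr x0) (min_idPr x1). Qed.

Lemma clamp01_in x : 0 <= clamp01 x <= 1.
Proof.
case: (lerP x 0) => [x0|x0]; first by rewrite clamp01_le0 // lexx ler01.
case: (lerP 1 x) => [x1|x1]; first by rewrite clamp01_ge1 // lexx ler01.
by rewrite clamp01_id ?(ltW x0) ?(ltW x1).
Qed.

Lemma clamp01_continuous : continuous clamp01.
Proof.
move=> x; apply: continuous_min; first exact: cst_continuous.
by apply: continuous_max; [exact: cst_continuous | exact: cvg_id].
Qed.

(* A homeomorphism of [0, 1] fixing 0 and 1 whose right branch 1/(2 - u) is
   parabolic at 1: it maps (k+1)/(k+2) to (k+2)/(k+3). *)
Definition shift01 u : R := Num.min (2 * u / (1 + u)) (1 / (2 - u)).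
Definition shift01_inv v : R := Num.max (v / (2 - v)) (2 - 1 / Num.max v (1/2)).

Lemma shift01_lo u : 0 <= u <= 1/2 -> shift01 u = 2 * u / (1 + u).
Proof.
by case/andP=> u0 u1; apply/min_idPl; rewrite ler_pdiv2; [nra|lra|lra].
Qed.

Lemma shift01_hi u : 1/2 <= u <= 1 -> shift01 u = 1 / (2 - u).
Proof.
by case/andP=> u0 u1; apply/min_idPr; rewrite ler_pdiv2; [nra|lra|lra].
Qed.

Lemma shift01_inv_lo v : 0 <= v <= 2/3 -> shift01_inv v = v / (2 - v).
Proof.
case/andP=> v0 v1; apply/max_idPl; case: (lerP v (1/2)) => hv.
  rewrite (_ : 2 - 1 / (1/2) = 0); last by field.
  by apply: divr_ge0; lra.
rewrite (_ : 2 - 1 / v = (2 * v - 1) / v); last by field; lra.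
by rewrite ler_pdiv2; [nra|lra|lra].
Qed.

Lemma shift01_inv_hi v : 2/3 <= v <= 1 -> shift01_inv v = 2 - 1 / v.
Proof.
case/andP=> v0 v1; rewrite /shift01_inv (_ : Num.max v (1/2) = v); last by apply/max_idPl; lra.
apply/max_idPr; rewrite (_ : 2 - 1 / v = (2 * v - 1) / v); last by field; lra.
by rewrite ler_pdiv2; [nra|lra|lra].
Qed.

Lemma shift01_in u : 0 <= u <= 1 -> 0 <= shift01 u <= 1.
Proof.
case/andP=> u0 u1; case: (lerP u (1/2)) => hu.
  by rewrite shift01_lo ?u0 // divr_ge0 ?ler_pdivrMr /=; lra.
by rewrite shift01_hi ?divr_ge0 ?ler_pdivrMr /=; lra.
Qed.

Lemma shift01_inv_in v : 0 <= v <= 1 -> 0 <= shift01_inv v <= 1.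
Proof.
case/andP=> v0 v1; case: (lerP v (2/3)) => hv.
  by rewrite shift01_inv_lo ?v0 // divr_ge0 ?ler_pdivrMr /=; lra.
rewrite shift01_inv_hi; last lra.
rewrite (_ : 2 - 1 / v = (2 * v - 1) / v); last by field; lra.
by rewrite divr_ge0 ?ler_pdivrMr /=; lra.
Qed.

Lemma shift01K u : 0 <= u <= 1 -> shift01_inv (shift01 u) = u.
Proof.
case/andP=> u0 u1; case: (lerP u (1/2)) => hu.
  rewrite shift01_lo ?u0 // shift01_inv_lo; first by field; lra.
  by rewrite divr_ge0 ?ler_pdivrMr /=; lra.
rewrite shift01_hi ?shift01_inv_hi; first (by field; lra); last lra.
by rewrite ler_pdivlMr ?ler_pdivrMr /=; lra.
Qed.

Lemma shift01_invK v : 0 <= v <= 1 -> shift01 (shift01_inv v) = v.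
Proof.
case/andP=> v0 v1; case: (lerP v (2/3)) => hv.
  rewrite shift01_inv_lo ?v0 // shift01_lo; first by field; lra.
  by rewrite divr_ge0 ?ler_pdivrMr /=; lra.
rewrite shift01_inv_hi; last lra.
rewrite (_ : 2 - 1 / v = (2 * v - 1) / v); last by field; lra.
rewrite shift01_hi; first by field; lra.
by rewrite ler_pdivlMr ?ler_pdivrMr /=; lra.
Qed.

Lemma shift01_0 : shift01 0 = 0.
Proof. by rewrite shift01_lo ?mulr0 ?mul0r //= lexx; lra. Qed.
Lemma shift01_1 : shift01 1 = 1.
Proof. by rewrite shift01_hi; [field | lra]. Qed.
Lemma shift01_inv0 : shift01_inv 0 = 0.
Proof. by rewrite shift01_inv_lo ?mul0r //= lexx; lra. Qed.
Lemma shift01_inv1 : shift01_inv 1 = 1.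
Proof. by rewrite shift01_inv_hi; [field | lra]. Qed.

Lemma shift01_continuous u : 0 <= u <= 1 -> {for u, continuous shift01}.
Proof.
case/andP=> u0 u1; apply: continuous_min.
  apply: continuousM; first by apply: continuousM; [exact: cst_continuous | exact: cvg_id].
  apply: continuousV; first by rewrite /=; lra.
  by apply: continuousD; [exact: cst_continuous | exact: cvg_id].
apply: continuousM; first exact: cst_continuous.
apply: continuousV; first by rewrite /=; lra.
by apply: continuousB; [exact: cst_continuous | exact: cvg_id].
Qed.

Lemma shift01_inv_continuous v : 0 <= v <= 1 -> {for v, continuous shift01_inv}.
Proof.
case/andP=> v0 v1; apply: continuous_max.
  apply: continuousM; first exact: cvg_id.
  apply: continuousV; first by rewrite /=; lra.
  by apply: continuousB; [exact: cst_continuous | exact: cvg_id].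
apply: continuousB; first exact: cst_continuous.
apply: continuousM; first exact: cst_continuous.
apply: continuousV; first by rewrite /= gt_eqF // lt_max; apply/orP; right; lra.
by apply: continuous_max; [exact: cvg_id | exact: cst_continuous].
Qed.

Definition orbit01 (k : nat) : R := k.+1%:R / k.+2%:R.

Lemma orbit01_in k : 1/2 <= orbit01 k < 1.
Proof.
have k0 := ler0n R k.
rewrite /orbit01 ler_pdivlMr ?ltr_pdivrMr ?ltr0n // -[k.+2]addn2 -[k.+1]addn1 !natrD.
by apply/andP; split; lra.
Qed.

Lemma shift01_orbit k : shift01 (orbit01 k) = orbit01 k.+1.
Proof.
have /andP[u0 u1] := orbit01_in k; have k0 := ler0n R k.
rewrite shift01_hi; last lra.
rewrite /orbit01 -[k.+3]addn3 -[k.+2]addn2 -[k.+1]addn1 !natrD.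
by field; apply/andP; split; apply: lt0r_neq0; lra.
Qed.

End ShiftOnUnitInterval.

Section AnnulusMap.
Variable R : realType.
Implicit Types r u : R.

Definition annulus01 r : R := clamp01 (4 * r - 1).

Lemma annulus01_in r : 0 <= annulus01 r <= 1.
Proof. exact: clamp01_in. Qed.

Lemma annulus01_lo r : r <= 1/4 -> annulus01 r = 0.
Proof. by move=> r1; rewrite /annulus01 clamp01_le0 //; lra. Qed.

Lemma annulus01_hi r : 1/2 <= r -> annulus01 r = 1.
Proof. by move=> r1; rewrite /annulus01 clamp01_ge1 //; lra. Qed.

Lemma annulus01_mid r : 1/4 <= r <= 1/2 -> annulus01 r = 4 * r - 1.
Proof. by case/andP=> r0 r1; rewrite /annulus01 clamp01_id //; apply/andP; split; lra. Qed.

Lemma annulus01_continuous : continuous annulus01.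
Proof.
have -> : annulus01 = @clamp01 R \o (fun r : R => 4 * r - 1) by [].
move=> r; apply: continuous_comp; last exact: clamp01_continuous.
apply: continuousB; last exact: cst_continuous.
by apply: continuousM; [exact: cst_continuous | exact: cvg_id].
Qed.

Variable s : R -> R.
Hypothesis s_in : forall u, 0 <= u <= 1 -> 0 <= s u <= 1.
Hypothesis s0 : s 0 = 0.
Hypothesis s1 : s 1 = 1.

(* Acts as s on the coordinate 4 r - 1 of the annulus 1/4 <= r <= 1/2 and as the
   identity elsewhere. *)
Definition annulus_map r : R := r + (s (annulus01 r) - annulus01 r) / 4.
Definition annulus_scale r : R :=
  1 + (s (annulus01 r) - annulus01 r) / (4 * Num.max r (1/4)).

Lemma annulus_map_lo r : r <= 1/4 -> annulus_map r = r.
Proof. by move=> r1; rewrite /annulus_map annulus01_lo // s0 subrr mul0r addr0. Qed.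

Lemma annulus_scale_lo r : r <= 1/4 -> annulus_scale r = 1.
Proof. by move=> r1; rewrite /annulus_scale annulus01_lo // s0 subrr mul0r addr0. Qed.

Lemma annulus_map_hi r : 1/2 <= r -> annulus_map r = r.
Proof. by move=> r1; rewrite /annulus_map annulus01_hi // s1 subrr mul0r addr0. Qed.

Lemma annulus01_map r : annulus01 (annulus_map r) = s (annulus01 r).
Proof.
case: (lerP r (1/4)) => r1; first by rewrite annulus_map_lo // annulus01_lo.
case: (lerP (1/2) r) => r2; first by rewrite annulus_map_hi // annulus01_hi.
have rm : 1/4 <= r <= 1/2 by apply/andP; split; lra.
have := s_in (annulus01_in r); rewrite /annulus_map (annulus01_mid rm) => /andP[a b].
by rewrite annulus01_mid; [field | apply/andP; split; lra].
Qed.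

Lemma annulus_map_ge0 r : 0 <= r -> 0 <= annulus_map r.
Proof.
move=> r0; case: (lerP r (1/4)) => r1; first by rewrite annulus_map_lo.
have /andP[a b] := s_in (annulus01_in r); have /andP[c d] := annulus01_in r.
rewrite /annulus_map; lra.
Qed.

Lemma annulus_map_le_half r : 0 <= r <= 1/2 -> annulus_map r <= 1/2.
Proof.
case/andP=> r0 r1; case: (lerP r (1/4)) => r2; first by rewrite annulus_map_lo //; lra.
have rm : 1/4 <= r <= 1/2 by apply/andP; split; lra.
have := s_in (annulus01_in r); rewrite /annulus_map (annulus01_mid rm) => /andP[a b].
lra.
Qed.

Lemma annulus_scaleM r : 0 <= r -> annulus_scale r * r = annulus_map r.
Proof.
move=> r0; case: (lerP r (1/4)) => r1; first by rewrite annulus_map_lo // annulus_scale_lo // mul1r.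
by rewrite /annulus_scale /annulus_map (max_idPl (ltW r1)); field; lra.
Qed.

Lemma annulus_scale_ge0 r : 0 <= r -> 0 <= annulus_scale r.
Proof.
move=> r0; case: (lerP r (1/4)) => r1; first by rewrite annulus_scale_lo.
have : 0 <= annulus_scale r * r by rewrite annulus_scaleM // annulus_map_ge0.
by rewrite pmulr_lge0 //; lra.
Qed.

Lemma annulus_scale_hi r : 1/2 <= r -> annulus_scale r = 1.
Proof. by move=> r1; rewrite /annulus_scale annulus01_hi // s1 subrr mul0r addr0. Qed.

Lemma annulus_scale_continuous :
  (forall u, 0 <= u <= 1 -> {for u, continuous s}) ->
  forall r, {for r, continuous annulus_scale}.
Proof.
move=> s_cont r; apply: continuousD; first exact: cst_continuous.
apply: continuousM.
  apply: continuousB; last exact: annulus01_continuous.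
  apply: (@continuous_comp _ _ _ annulus01 s); first exact: annulus01_continuous.
  exact/s_cont/annulus01_in.
apply: continuousV; first by rewrite /= mulf_neq0 // gt_eqF // lt_max; apply/orP; right; lra.
apply: continuousM; first exact: cst_continuous.
by apply: continuous_max; [exact: cvg_id | exact: cst_continuous].
Qed.

End AnnulusMap.

Section AnnulusMapInverse.
Variable R : realType.
Variables s t : R -> R.
Hypothesis s_in : forall u, 0 <= u <= 1 -> 0 <= s u <= 1.
Hypothesis s0 : s 0 = 0.
Hypothesis s1 : s 1 = 1.
Hypothesis t0 : t 0 = 0.
Hypothesis sK : forall u, 0 <= u <= 1 -> t (s u) = u.

Lemma annulus_mapK : cancel (annulus_map s) (annulus_map t).
Proof.
move=> r; rewrite {1}/annulus_map annulus01_map // sK ?annulus01_in //.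
by rewrite /annulus_map; field.
Qed.

Lemma annulus_scaleK r :
  0 <= r -> annulus_scale t (annulus_map s r) * annulus_scale s r = 1.
Proof.
move=> r0; case: (lerP r (1/4)) => r1.
  by rewrite annulus_map_lo // !annulus_scale_lo ?mulr1.
apply: (mulIf (lt0r_neq0 (lt_le_trans _ (ltW r1)))); first lra.
rewrite mul1r -mulrA annulus_scaleM // annulus_scaleM ?annulus_map_ge0 //.
exact: annulus_mapK.
Qed.

End AnnulusMapInverse.

Section TwistAngle.
Variable R : realType.
Implicit Types r u : R.

Definition twist_angle01 u : R := pi *+ 2 * Num.sqrt (1 - u) / (1 + Num.sqrt u).
Definition twist_angle r : R := twist_angle01 (annulus01 r).

Lemma twist_angle_hi r : 1/2 <= r -> twist_angle r = 0.
Proof.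
by move=> r1; rewrite /twist_angle annulus01_hi // /twist_angle01 subrr sqrtr0 mulr0 mul0r.
Qed.

Lemma twist_angle_continuous : continuous twist_angle.
Proof.
move=> r; apply: (@continuous_comp _ _ _ (@annulus01 R) twist_angle01).
  exact: annulus01_continuous.
apply: continuousM.
  apply: continuousM; first exact: cst_continuous.
  apply: (@continuous_comp _ _ _ (fun u : R => 1 - u) (@Num.sqrt R)).
    by apply: continuousB; [exact: cst_continuous | exact: cvg_id].
  exact: sqrt_continuous.
apply: continuousV; first by rewrite /= gt_eqF // ltr_pwDl // sqrtr_ge0.
by apply: continuousD; [exact: cst_continuous | exact: sqrt_continuous].
Qed.

Definition orbit_radius (k : nat) : R := 1/4 + orbit01 R k / 4.

Lemma orbit_radius_in k : 3/8 <= orbit_radius k < 1/2.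
Proof. by have /andP[a b] := orbit01_in R k; rewrite /orbit_radius; apply/andP; split; lra. Qed.

Lemma annulus01_orbit k : annulus01 (orbit_radius k) = orbit01 R k.
Proof.
have /andP[a b] := orbit01_in R k.
by rewrite annulus01_mid /orbit_radius; [field | apply/andP; split; lra].
Qed.

Lemma shift_orbit_radius k : annulus_map (@shift01 R) (orbit_radius k) = orbit_radius k.+1.
Proof. by rewrite /annulus_map annulus01_orbit shift01_orbit /orbit_radius; field. Qed.

(* With 1 - u_k = 1/(k+2), the angle is the increment of the orbit angle
   2 pi sqrt(k+1): sqrt(k+2) - sqrt(k+1) = sqrt(1 - u_k) / (1 + sqrt u_k). *)
Lemma twist_angle_orbit k :
  twist_angle (orbit_radius k) = pi *+ 2 * (Num.sqrt k.+2%:R - Num.sqrt k.+1%:R).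
Proof.
rewrite /twist_angle annulus01_orbit /twist_angle01 -mulrA; congr (_ * _).
set A := Num.sqrt (k.+2%:R : R); set B := Num.sqrt (k.+1%:R : R).
have A0 : 0 < A by rewrite sqrtr_gt0 ltr0n.
have B0 : 0 <= B by rewrite sqrtr_ge0.
have A2 : A ^+ 2 = k.+2%:R by rewrite sqr_sqrtr // ler0n.
have B2 : B ^+ 2 = k.+1%:R by rewrite sqr_sqrtr // ler0n.
have -> : 1 - orbit01 R k = (A^-1) ^+ 2.
  rewrite exprVn A2 /orbit01 -[k.+2]addn2 -[k.+1]addn1 !natrD.
  by field; rewrite gt_eqF // ltr_pwDr // ler0n.
have -> : orbit01 R k = (B / A) ^+ 2 by rewrite expr_div_n A2 B2.
rewrite !sqrtr_sqr !ger0_norm ?invr_ge0 ?divr_ge0 ?(ltW A0) //.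
have AB : A ^+ 2 - B ^+ 2 = 1 by rewrite A2 B2 -[k.+2]addn1 natrD; lra.
have AB0 : A + B != 0 by rewrite gt_eqF //; lra.
have -> : A - B = (A + B)^-1.
  by apply: (mulIf AB0); rewrite mulVf // -AB; ring.
by field; rewrite AB0 gt_eqF.
Qed.

End TwistAngle.

Lemma sum_continuous (R : numFieldType) (T : topologicalType) (I : Type) (r : seq I)
    (F : I -> T -> R) (x : T) :
  (forall i, {for x, continuous (F i)}) ->
  {for x, continuous (fun y => \sum_(i <- r) F i y)}.
Proof.
move=> F_cont; elim: r => [|i r IH].
  rewrite (_ : (fun y => _) = fun=> 0); first exact: cst_continuous.
  by apply: funext => y; rewrite big_nil.
rewrite (_ : (fun y => _) = fun y => F i y + \sum_(j <- r) F j y); first exact: continuousD.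
by apply: funext => y; rewrite big_cons.
Qed.

Section EuclideanNorm.
Variables (R : realType) (n : nat).
Local Notation V := 'rV[R]_n.
Implicit Types (x : V) (c : R).

Definition vnorm x : R := Num.sqrt (sqnorm x).

Lemma sqnorm_ge0 x : 0 <= sqnorm x.
Proof. by apply: sumr_ge0 => i _; rewrite sqr_ge0. Qed.

Lemma sqr_coord_le_sqnorm x i : x ord0 i ^+ 2 <= sqnorm x.
Proof. by rewrite /sqnorm (bigD1 i) //= lerDl; apply: sumr_ge0 => j _; exact: sqr_ge0. Qed.

Lemma vnorm_ge0 x : 0 <= vnorm x.
Proof. exact: sqrtr_ge0. Qed.

Lemma vnorm_continuous x : {for x, continuous vnorm}.
Proof.
apply: (@continuous_comp _ _ _ (@sqnorm R n) (@Num.sqrt R)); last exact: sqrt_continuous.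
by apply: sum_continuous => i; apply: continuousM; exact: coord_continuous.
Qed.

Lemma vnormZ c x : vnorm (c *: x) = `|c| * vnorm x.
Proof.
rewrite /vnorm (_ : sqnorm (c *: x) = c ^+ 2 * sqnorm x).
  by rewrite sqrtrM ?sqr_ge0 // sqrtr_sqr.
by rewrite /sqnorm mulr_sumr; apply: eq_bigr => i _; rewrite mxE; ring.
Qed.

End EuclideanNorm.

Section PlaneRotation.
Variables (R : realType) (n : nat) (i0 i1 : 'I_n).
Hypothesis i01 : i0 != i1.
Let i10 : i1 != i0. Proof. by rewrite eq_sym. Qed.
Local Notation V := 'rV[R]_n.
Implicit Types (x : V) (a c : R).

Definition e0 : V := delta_mx 0 i0.
Definition e1 : V := delta_mx 0 i1.
Definition plane_dir a : V := cos a *: e0 + sin a *: e1.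

Lemma vnorm_plane_dir a : vnorm (plane_dir a) = 1.
Proof.
rewrite /vnorm /sqnorm (bigD1 i0) // (bigD1 i1) //= big1; last first.
  by move=> i /andP[j0 j1]; rewrite !mxE /= (negbTE j0) (negbTE j1) /=; ring.
rewrite !mxE /= !eqxx (negbTE i01) (negbTE i10) /=.
by rewrite !mulr1 !mulr0 addr0 add0r addr0 cos2Dsin2 sqrtr1.
Qed.

Definition plane_rot a x : V :=
  x + (cos a - 1) *: (x ord0 i0 *: e0 + x ord0 i1 *: e1)
    + sin a *: (x ord0 i0 *: e1 - x ord0 i1 *: e0).

Lemma plane_rot_coord a x j : plane_rot a x ord0 j =
  if j == i0 then cos a * x ord0 i0 - sin a * x ord0 i1
  else if j == i1 then sin a * x ord0 i0 + cos a * x ord0 i1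
  else x ord0 j.
Proof.
rewrite !mxE /=; case: (eqVneq j i0) => [->|_] /=; first by rewrite (negbTE i01) /=; ring.
by case: (eqVneq j i1) => [->|_] /=; ring.
Qed.

Lemma vnorm_plane_rot a x : vnorm (plane_rot a x) = vnorm x.
Proof.
rewrite /vnorm /sqnorm (bigD1 i0) // [in RHS](bigD1 i0) //= (bigD1 i1) //.
rewrite [in RHS](bigD1 i1) //= !plane_rot_coord ?eqxx ?(negbTE i01) ?(negbTE i10) /=.
rewrite (eq_bigr (fun i => x ord0 i ^+ 2)); last first.
  by move=> i /andP[j0 j1]; rewrite plane_rot_coord (negbTE j0) (negbTE j1).
rewrite !addrA; congr (Num.sqrt (_ + _)); rewrite -[RHS]mul1r -(cos2Dsin2 a); ring.
Qed.

Lemma plane_rotD a c x : plane_rot a (plane_rot c x) = plane_rot (a + c) x.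
Proof.
apply/rowP => j; rewrite !plane_rot_coord ?eqxx ?(negbTE i01) ?(negbTE i10) /= cosD sinD.
by case: (eqVneq j i0) => [_|j0]; [|case: (eqVneq j i1) => [_|j1]] => /=; ring.
Qed.

Lemma plane_rot0 x : plane_rot 0 x = x.
Proof. by rewrite /plane_rot cos0 sin0 subrr !scale0r !addr0. Qed.

Lemma plane_rotK a : cancel (plane_rot a) (plane_rot (- a)).
Proof. by move=> x; rewrite plane_rotD addNr plane_rot0. Qed.

Lemma plane_rotZ a c x : plane_rot a (c *: x) = c *: plane_rot a x.
Proof.
apply/rowP => j; rewrite plane_rot_coord [in RHS]mxE plane_rot_coord !mxE.
by case: ifP => _; [|case: ifP => _]; ring.
Qed.

Lemma plane_rot_dir a c : plane_rot a (plane_dir c) = plane_dir (a + c).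
Proof.
apply/rowP => j; rewrite plane_rot_coord !mxE /= ?eqxx ?(negbTE i01) ?(negbTE i10) /=.
rewrite cosD sinD; case: (eqVneq j i0) => [->|_] /=; first by rewrite (negbTE i01) /=; ring.
by case: (eqVneq j i1) => _ /=; ring.
Qed.

Lemma plane_rot_continuous (b : V -> R) x :
  {for x, continuous b} -> {for x, continuous (fun y => plane_rot (b y) y)}.
Proof.
move=> b_cont; apply: continuousD; first apply: continuousD.
- exact: cvg_id.
- apply: continuousZ.
    apply: continuousB; last exact: cst_continuous.
    exact: (continuous_comp b_cont (@continuous_cos R _)).
  by apply: continuousD; apply: continuousZr_tmp; exact: coord_continuous.
- apply: continuousZ; first exact: (continuous_comp b_cont (@continuous_sin R _)).
  by apply: continuousB; apply: continuousZr_tmp; exact: coord_continuous.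
Qed.

End PlaneRotation.

Lemma plane_dir_continuous (R : realType) (n : nat) (i0 i1 : 'I_n) (a : R) :
  {for a, continuous (plane_dir i0 i1)}.
Proof.
rewrite /plane_dir; apply: continuousD; apply: continuousZr_tmp.
  exact: continuous_cos.
exact: continuous_sin.
Qed.

Lemma plane_dir_periodic (R : realType) (n : nat) (i0 i1 : 'I_n) (a : R) (N : nat) :
  plane_dir i0 i1 (a + pi *+ 2 *+ N) = plane_dir i0 i1 a.
Proof. by rewrite /plane_dir (periodicn (@cosD2pi R)) (periodicn (@sinD2pi R)). Qed.

Section BallMap.
Variables (R : realType) (n : nat) (i0 i1 : 'I_n).
Hypothesis i01 : i0 != i1.
Local Notation V := 'rV[R]_n.
Local Notation plane_rot := (plane_rot i0 i1).
Local Notation vnorm := (@vnorm R n).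
Implicit Types (x : V) (b s t : R -> R).

Definition twist b x : V := plane_rot (b (vnorm x)) x.

Lemma vnorm_twist b x : vnorm (twist b x) = vnorm x.
Proof. exact: vnorm_plane_rot. Qed.

Lemma twistK b : cancel (twist b) (twist (fun r => - b r)).
Proof. by move=> x; rewrite /twist vnorm_twist plane_rotK. Qed.

Lemma twist_continuous b x : continuous b -> {for x, continuous (twist b)}.
Proof.
move=> b_cont; apply: plane_rot_continuous.
exact: (continuous_comp (@vnorm_continuous _ _ x) (b_cont _)).
Qed.

Definition dilate s x : V := annulus_scale s (vnorm x) *: x.

Lemma vnorm_dilate s x :
  (forall u, 0 <= u <= 1 -> 0 <= s u <= 1) -> s 0 = 0 ->
  vnorm (dilate s x) = annulus_map s (vnorm x).
Proof.
move=> s_in s0; rewrite /dilate vnormZ ger0_norm ?annulus_scale_ge0 ?vnorm_ge0 //.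
by rewrite annulus_scaleM ?vnorm_ge0.
Qed.

Lemma dilateK s t :
  (forall u, 0 <= u <= 1 -> 0 <= s u <= 1) -> s 0 = 0 -> s 1 = 1 -> t 0 = 0 ->
  (forall u, 0 <= u <= 1 -> t (s u) = u) -> cancel (dilate s) (dilate t).
Proof.
move=> s_in s0 s1 t0 sK x; rewrite {1}/dilate vnorm_dilate // /dilate scalerA.
by rewrite annulus_scaleK ?vnorm_ge0 // scale1r.
Qed.

Lemma dilate_continuous s x :
  (forall u, 0 <= u <= 1 -> {for u, continuous s}) -> {for x, continuous (dilate s)}.
Proof.
move=> s_cont; apply: continuousZ; last exact: cvg_id.
apply: (@continuous_comp _ _ _ vnorm (annulus_scale s)); first exact: vnorm_continuous.
exact: annulus_scale_continuous.
Qed.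

Definition ball_map x : V := dilate (@shift01 R) (twist (@twist_angle R) x).
Definition ball_map_inv x : V :=
  twist (fun r => - twist_angle r) (dilate (@shift01_inv R) x).

Lemma ball_mapK : cancel ball_map ball_map_inv.
Proof.
move=> x; rewrite /ball_map /ball_map_inv (dilateK (@shift01_in R)) ?twistK //.
- exact: shift01_0.
- exact: shift01_1.
- exact: shift01_inv0.
- exact: shift01K.
Qed.

Lemma ball_map_invK : cancel ball_map_inv ball_map.
Proof.
move=> x; rewrite /ball_map /ball_map_inv.
rewrite (_ : twist _ (twist _ _) = dilate (@shift01_inv R) x); last first.
  rewrite -[RHS](twistK (fun r => - twist_angle r)); congr twist.
  by apply: funext => r; rewrite opprK.
rewrite (dilateK (@shift01_inv_in R)) //.
- exact: shift01_inv0.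
- exact: shift01_inv1.
- exact: shift01_0.
- exact: shift01_invK.
Qed.

Lemma vnorm_ball_map x : vnorm (ball_map x) = annulus_map (@shift01 R) (vnorm x).
Proof.
by rewrite vnorm_dilate ?vnorm_twist //; [exact: shift01_in | exact: shift01_0].
Qed.

Lemma ball_map_id x : 1/2 <= vnorm x -> ball_map x = x.
Proof.
move=> x1; rewrite /ball_map /dilate /twist twist_angle_hi // plane_rot0.
by rewrite annulus_scale_hi ?scale1r //; exact: shift01_1.
Qed.

Lemma ball_map_inv_id x : 1/2 <= vnorm x -> ball_map_inv x = x.
Proof. by move=> x1; rewrite -{1}(ball_map_id x1) ball_mapK. Qed.

Lemma ball_map_le_half x : vnorm x <= 1/2 -> vnorm (ball_map x) <= 1/2.
Proof.
move=> x1; rewrite vnorm_ball_map annulus_map_le_half ?vnorm_ge0 //.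
- exact: shift01_in.
- exact: shift01_0.
Qed.

Lemma ball_map_inv_le_half x : vnorm x <= 1/2 -> vnorm (ball_map_inv x) <= 1/2.
Proof.
move=> x1; case: (lerP (vnorm (ball_map_inv x)) (1/2)) => // y1.
have := ball_map_id (ltW y1); rewrite ball_map_invK => xE.
by move: y1; rewrite -xE; lra.
Qed.

Lemma ball_map_continuous x : {for x, continuous ball_map}.
Proof.
apply: (@continuous_comp _ _ _ (twist (@twist_angle R)) (dilate (@shift01 R))).
  exact/twist_continuous/twist_angle_continuous.
by apply: dilate_continuous; exact: shift01_continuous.
Qed.

Lemma ball_map_inv_continuous x : {for x, continuous ball_map_inv}.
Proof.
apply: (@continuous_comp _ _ _ (dilate (@shift01_inv R)) (twist _)).
  by apply: dilate_continuous; exact: shift01_inv_continuous.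
by apply: twist_continuous => r; apply: continuousN; exact: twist_angle_continuous.
Qed.

Definition orbit_pt (k : nat) : V :=
  orbit_radius R k *: plane_dir i0 i1 (pi *+ 2 * Num.sqrt k.+1%:R).

Lemma vnorm_orbit_pt k : vnorm (orbit_pt k) = orbit_radius R k.
Proof.
rewrite vnormZ vnorm_plane_dir // mulr1 ger0_norm //.
by have /andP[r0 _] := orbit_radius_in R k; lra.
Qed.

Lemma ball_map_orbit_pt k : ball_map (orbit_pt k) = orbit_pt k.+1.
Proof.
rewrite /ball_map /dilate vnorm_twist /twist vnorm_orbit_pt /orbit_pt.
rewrite (plane_rotZ i01) (plane_rot_dir i01) scalerA.
rewrite annulus_scaleM ?shift_orbit_radius; last first.
- by have /andP[r0 _] := orbit_radius_in R k; lra.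
- exact: shift01_0.
by rewrite twist_angle_orbit; congr (_ *: plane_dir _ _ _); ring.
Qed.

End BallMap.

Lemma unbounded_cvgn (phi : nat -> nat) :
  (forall N, exists M, forall i, (M <= i)%N -> (N <= phi i)%N) -> phi @ \oo --> \oo.
Proof. by move=> phi_oo P [N _ PN]; have [M MP] := phi_oo N; exists M => // i /MP /PN. Qed.

Section Sampling.
Variable R : realType.

Lemma orbit_radius_cvg : orbit_radius R k @[k --> \oo] --> (1/2 : R).
Proof.
have -> : orbit_radius R = fun k => 1/2 - harmonic k.+1 / 4.
  apply: funext => k; rewrite /orbit_radius /orbit01 /= -[k.+2]addn1 natrD.
  by field; rewrite gt_eqF // ltr_pwDr // ler0n.
rewrite -[X in _ --> X]subr0 -(mul0r 4^-1).
apply: cvgB; first exact: cvg_cst.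
by apply: cvgMl; rewrite (cvg_shiftS (@harmonic R)); exact: cvg_harmonic.
Qed.

Variable q : nat.
(* Along the indices sample m, the orbit angle 2 pi sqrt(sample m + 1) is
   2 pi q (m+1) + 2 pi sample_angle m, and sample_angle m tends to 1/q. *)
Definition sample (m : nat) : nat := ((q * m.+1) ^ 2 + m.*2.+1)%N.
Definition sample_angle (m : nat) : R :=
  Num.sqrt (sample m).+1%:R - (q * m.+1)%:R.

Lemma sample_ge m : (m <= sample m)%N.
Proof. rewrite /sample; lia. Qed.

Lemma sample_cvg : sample @ \oo --> \oo.
Proof. by apply: unbounded_cvgn => N; exists N => i /leq_trans; apply; exact: sample_ge. Qed.

Hypothesis q_gt0 : (0 < q)%N.

Lemma sample_angleE m :
  sample_angle m = 2 / (Num.sqrt (q%:R ^+ 2 + 2 * harmonic m) + q%:R).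
Proof.
rewrite /sample_angle.
set h : R := harmonic m; set M : R := m.+1%:R; set S := Num.sqrt (_ + _).
have M0 : 0 < M by rewrite ltr0n.
have hM : h * M = 1 by rewrite /h /harmonic /= mulVf // gt_eqF.
have h0 : 0 <= h by rewrite /h harmonic_ge0.
have q0 : 0 < q%:R :> R by rewrite ltr0n.
have S0 : 0 <= S by rewrite sqrtr_ge0.
have S2 : S ^+ 2 = q%:R ^+ 2 + 2 * h by rewrite sqr_sqrtr //; nra.
have -> : Num.sqrt (sample m).+1%:R = M * S.
  rewrite -(ger0_norm (mulr_ge0 (ltW M0) S0)) -sqrtr_sqr exprMn S2.
  have -> : (sample m).+1 = ((q * m.+1) ^ 2 + 2 * m.+1)%N by rewrite /sample; lia.
  rewrite natrD natrX !natrM -/M mulrDr (_ : M ^+ 2 * (2 * h) = 2 * (h * M) * M).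
    by rewrite hM; congr (Num.sqrt _); ring.
  by ring.
have Sq : S + q%:R != 0 by rewrite gt_eqF //; lra.
apply: (mulIf Sq); rewrite divfK // natrM -/M.
have : (S - q%:R) * (S + q%:R) = 2 * h by rewrite -subr_sqr S2; ring.
rewrite (_ : (M * S - q%:R * M) * _ = M * ((S - q%:R) * (S + q%:R))); last by ring.
by move=> ->; lra.
Qed.

Lemma sample_angle_cvg : sample_angle m @[m --> \oo] --> (q%:R : R)^-1.
Proof.
have q0 : 0 < q%:R :> R by rewrite ltr0n.
pose f (y : R) := 2 / (Num.sqrt (q%:R ^+ 2 + 2 * y) + q%:R).
have f0 : f 0 = (q%:R : R)^-1.
  rewrite /f mulr0 addr0 sqrtr_sqr ger0_norm; last exact: ltW.
  by field; rewrite ?gt_eqF ?addr_gt0.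
have f_cont : {for 0, continuous f}.
  apply: continuousM; first exact: cst_continuous.
  apply: continuousV; first by rewrite mulr0 addr0 sqrtr_sqr ger0_norm ?gt_eqF ?ltW //; lra.
  apply: continuousD; last exact: cst_continuous.
  apply: (continuous_comp _ (@sqrt_continuous R _)).
  apply: continuousD; first exact: cst_continuous.
  by apply: continuousM; [exact: cst_continuous | exact: cvg_id].
rewrite -f0 (_ : sample_angle = f \o harmonic); last first.
  by apply: funext => m; rewrite /= sample_angleE.
exact: (continuous_cvg _ f_cont (@cvg_harmonic R)).
Qed.
End Sampling.

Section OrbitLimits.
Variables (R : realType) (n : nat) (i0 i1 : 'I_n).
Hypothesis i01 : i0 != i1.
Local Notation V := 'rV[R]_n.

Definition limit_pt (q : nat) : V := (1/2) *: plane_dir i0 i1 (pi *+ 2 / q%:R).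

Lemma vnorm_limit_pt q : vnorm (limit_pt q) = 1/2.
Proof. by rewrite vnormZ vnorm_plane_dir // mulr1 ger0_norm //; lra. Qed.

Lemma orbit_pt_sample_cvg q : (0 < q)%N ->
  @orbit_pt R n i0 i1 (sample q m) @[m --> \oo] --> limit_pt q.
Proof.
move=> q_gt0.
have -> : (fun m => @orbit_pt R n i0 i1 (sample q m)) =
    fun m => orbit_radius R (sample q m) *: plane_dir i0 i1 (pi *+ 2 * sample_angle R q m).
  apply: funext => m; rewrite /orbit_pt -[in RHS](plane_dir_periodic _ _ _ (q * m.+1)).
  by congr (_ *: plane_dir _ _ _); rewrite /sample_angle -[pi *+ 2 *+ _]mulr_natr; ring.
apply: cvgZ.
  exact: (cvg_comp _ _ (sample_cvg q) (@orbit_radius_cvg R)).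
apply: continuous_cvg; first exact: plane_dir_continuous.
by apply: cvgM; [exact: cvg_cst | exact: sample_angle_cvg].
Qed.

Lemma limit_pt_closed_ball q : closed_ball_n R n (limit_pt q).
Proof. by rewrite /closed_ball_n /= -/(vnorm _) vnorm_limit_pt //; lra. Qed.

Lemma limit_pt_inj q1 q2 :
  (1 < q1)%N -> (1 < q2)%N -> limit_pt q1 = limit_pt q2 -> q1 = q2.
Proof.
move=> q1_gt1 q2_gt1 /(congr1 (fun x : V => 2 * x ord0 i0)).
rewrite !mxE /= eqxx (negbTE i01) /= !mulr1 !mulr0 !addr0 !mulrA.
rewrite (_ : 2 * 1 / 2 = 1 :> R) ?mul1r; last by field.
have pi0 := pi_gt0 R.
have angle_in q : (1 < q)%N -> (pi : R) *+ 2 / q%:R \in `[0, pi].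
  move=> q_gt1; have q_ge2 : (2 : R) <= q%:R by rewrite ler_nat.
  rewrite in_itv /=; apply/andP; split.
    by apply: divr_ge0; [apply: mulrn_wge0; exact: (ltW pi0) | exact: ler0n].
  rewrite ler_pdivrMr ?(lt_le_trans _ q_ge2) // -[pi *+ 2]mulr_natr.
  by rewrite ler_pM2l.
move=> /(cos_inj (angle_in _ q1_gt1) (angle_in _ q2_gt1)).
have pi2 : pi *+ 2 != 0 :> R by rewrite gt_eqF // mulrn_wgt0.
by move=> /(mulfI pi2) /invr_inj /eqP; rewrite eqr_nat => /eqP.
Qed.
End OrbitLimits.

Lemma cvg_within_near {T : Type} {U : topologicalType} (F : set_system T) {FF : Filter F}
    (f : T -> U) (A : set U) (l : U) :
  f @ F --> l -> (\forall x \near F, A (f x)) -> f @ F --> within A (nbhs l).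
Proof. by move=> fl FA P /fl; apply: filterS2 FA => x Afx /(_ Afx). Qed.

Section HalfBall.
Variables (R : realType) (n : nat).
Local Notation V := 'rV[R]_n.

Definition half_ball : set V := [set w | vnorm w <= 1/2].

Lemma half_ball_closed : closed half_ball.
Proof.
apply: (@preimage_closed _ _ (@vnorm R n) [set r : R | r <= 1/2]); last exact: closed_le.
by move=> x _; exact: vnorm_continuous.
Qed.

Lemma half_ball_compact : compact half_ball.
Proof.
have cube : compact [set v : V | forall i, `[-1, 1]%classic (v ord0 i)].
  exact: (@rV_compact R n (fun _ => `[-1, 1]%classic)
    (fun _ => @segment_compact R (-1) 1)).
apply: (subclosed_compact half_ball_closed cube) => w w_half i.
have wi := sqr_coord_le_sqnorm w i.
have w_quarter : sqnorm w <= 1/4.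
  have := sqrtr_ge0 (sqnorm w); move: w_half; rewrite /half_ball /= /vnorm => w_half s0.
  by rewrite -[sqnorm w]sqr_sqrtr ?sqnorm_ge0 //; nra.
by rewrite /= in_itv /=; apply/andP; split; nra.
Qed.

Lemma half_ball_sub_open : half_ball `<=` open_ball_n R n.
Proof. by move=> w; rewrite /half_ball /open_ball_n /= /vnorm; lra. Qed.

Lemma open_ball_sub : open_ball_n R n `<=` closed_ball_n R n.
Proof. by move=> w; rewrite /open_ball_n /closed_ball_n /=; lra. Qed.

Lemma half_ball_sub : half_ball `<=` closed_ball_n R n.
Proof. by move=> w /half_ball_sub_open /open_ball_sub. Qed.

End HalfBall.
Arguments half_ball : clear implicits.

Section Transplant.
Variables (R : realType) (n : nat) (X : metricType R) (B : set X).
Variables (h : 'rV[R]_n -> X) (g : X -> 'rV[R]_n).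
Hypothesis h_cont : {within closed_ball_n R n, continuous h}.
Hypothesis g_cont : {within B, continuous g}.
Hypothesis h_onto : h @` closed_ball_n R n = B.
Hypothesis g_into : g @` B `<=` closed_ball_n R n.
Hypothesis hK : forall x, closed_ball_n R n x -> g (h x) = x.
Hypothesis gK : forall y, B y -> h (g y) = y.
Hypothesis h_open : open (h @` open_ball_n R n).
Local Notation V := 'rV[R]_n.
Local Notation CB := (closed_ball_n R n).

Lemma h_in w : CB w -> B (h w).
Proof. by move=> w_in; rewrite -h_onto; exists w. Qed.

Lemma g_in y : B y -> CB (g y).
Proof. by move=> y_in; apply: g_into; exists y. Qed.

(* X need not be compact: the image of the compact half ball is closed anyway. *)
Lemma h_half_ball_closed : closed (h @` half_ball R n).
Proof.
apply: compact_closed; first exact: metric_hausdorff.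
apply: continuous_compact; last exact: half_ball_compact.
exact: (continuous_subspaceW (@half_ball_sub R n) h_cont).
Qed.

Lemma h_cvg (u : nat -> V) (w : V) :
  (forall k, CB (u k)) -> CB w -> u @ \oo --> w -> h (u k) @[k --> \oo] --> h w.
Proof.
move=> u_in w_in u_cvg; apply: (cvg_comp _ _ (G := within CB (nbhs w))).
  by apply: cvg_within_near u_cvg _; exact: nearW u_in.
exact: (subspace_continuousP _ _).1 h_cont _ w_in.
Qed.

Lemma h_cvg_half_ball (u : nat -> V) (y : X) :
  (forall k, half_ball R n (u k)) -> h (u k) @[k --> \oo] --> y ->
  exists2 w, half_ball R n w & y = h w /\ u @ \oo --> w.
Proof.
move=> u_half hu_cvg.
have [w w_half hwy] : (h @` half_ball R n) y.
  apply: (closed_cvg _ h_half_ball_closed _ _ hu_cvg).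
  by apply: nearW => k; exists (u k).
have w_in := half_ball_sub w_half.
exists w => //; split; first by rewrite hwy.
have -> : u = g \o (h \o u) by apply: funext => k /=; rewrite hK //; apply: half_ball_sub.
rewrite -(hK w_in) hwy; apply: (cvg_comp _ _ (G := within B (nbhs y))).
  by apply: cvg_within_near hu_cvg _; apply: nearW => k; apply/h_in/half_ball_sub.
by rewrite -hwy; exact: (subspace_continuousP _ _).1 g_cont _ (h_in w_in).
Qed.

Section Extension.
Variable phi : V -> V.
Hypothesis phi_cont : forall w, {for w, continuous phi}.
Hypothesis phi_id : forall w, 1/2 <= vnorm w -> phi w = w.
Hypothesis phi_half : forall w, vnorm w <= 1/2 -> vnorm (phi w) <= 1/2.

Lemma phi_closed_ball w : CB w -> CB (phi w).
Proof.
rewrite /closed_ball_n /= => w_in; case: (lerP (vnorm w) (1/2)) => w_half.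
  by have := phi_half w_half; rewrite /vnorm; lra.
by rewrite phi_id // ltW.
Qed.

Definition transplant (y : X) : X := if pselect (B y) then h (phi (g y)) else y.

Lemma transplant_in y : B y -> transplant y = h (phi (g y)).
Proof. by rewrite /transplant; case: pselect. Qed.

Lemma transplant_out y : ~ B y -> transplant y = y.
Proof. by rewrite /transplant; case: pselect. Qed.

Lemma transplant_h w : CB w -> transplant (h w) = h (phi w).
Proof. by move=> w_in; rewrite transplant_in ?hK //; exact: h_in. Qed.

Lemma transplant_id y : ~ (h @` half_ball R n) y -> transplant y = y.
Proof.
move=> y_out; case: (pselect (B y)) => [y_in|]; last exact: transplant_out.
rewrite transplant_in // phi_id ?gK // leNgt; apply/negP => /ltW g_half.
by apply: y_out; exists (g y); rewrite ?gK.
Qed.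

Lemma transplant_continuous : continuous transplant.
Proof.
move=> y; rewrite /continuous_at.
case: (pselect ((h @` half_ball R n) y)) => [[w w_half <-]|y_out]; last first.
  have near_out : nbhs y (~` (h @` half_ball R n)).
    by apply: open_nbhs_nbhs; split => //; exact/closed_openC/h_half_ball_closed.
  rewrite (transplant_id y_out); apply: cvg_trans (near_eq_cvg _) cvg_id.
  by apply: filterS near_out => z /transplant_id.
have w_in := half_ball_sub w_half.
have near_B : nbhs (h w) B.
  have near_U : nbhs (h w) (h @` open_ball_n R n).
    by apply: open_nbhs_nbhs; split => //; exists w => //; exact: half_ball_sub_open.
  by apply: filterS near_U => z [v /open_ball_sub v_in <-]; exact: h_in.
have g_cvg : g @ nbhs (h w) --> w.
  rewrite -{2}(hK w_in) -(within_interior near_B).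
  exact: (subspace_continuousP _ _).1 g_cont _ (h_in w_in).
have phig_cvg : (phi \o g) @ nbhs (h w) --> within CB (nbhs (phi w)).
  apply: cvg_within_near; first exact: continuous_cvg g_cvg.
  by apply: filterS near_B => z /g_in /phi_closed_ball.
rewrite transplant_h //; apply: cvg_trans (near_eq_cvg _) (cvg_comp _ _ phig_cvg _).
  by apply: filterS near_B => z /transplant_in ->.
exact: (subspace_continuousP _ _).1 h_cont _ (phi_closed_ball w_in).
Qed.

End Extension.

Lemma transplantK (phi psi : V -> V) : (forall w, phi (psi w) = w) ->
  (forall w, CB w -> CB (psi w)) -> cancel (transplant psi) (transplant phi).
Proof.
move=> psiK psi_in y; case: (pselect (B y)) => [y_in|y_out]; last by rewrite !transplant_out.
by rewrite [transplant psi y]transplant_in // transplant_h ?psiK ?gK //; apply/psi_in/g_in.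
Qed.

End Transplant.

Section OmegaLimit.
Variables (R : realType) (n : nat) (X : metricType R) (B : set X).
Variables (h : 'rV[R]_n -> X) (g : X -> 'rV[R]_n).
Hypothesis h_cont : {within closed_ball_n R n, continuous h}.
Hypothesis g_cont : {within B, continuous g}.
Hypothesis h_onto : h @` closed_ball_n R n = B.
Hypothesis g_into : g @` B `<=` closed_ball_n R n.
Hypothesis hK : forall x, closed_ball_n R n x -> g (h x) = x.
Hypothesis gK : forall y, B y -> h (g y) = y.
Hypothesis h_open : open (h @` open_ball_n R n).
Variables i0 i1 : 'I_n.
Hypothesis i01 : i0 != i1.

Local Notation f := (transplant B h g (ball_map i0 i1)).
Local Notation f_inv := (transplant B h g (ball_map_inv i0 i1)).
Local Notation orbit_pt := (orbit_pt R i0 i1).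

Lemma transplant_ball_map_self_homeo : self_homeo f.
Proof.
have map_id := ball_map_id (R := R) i0 i1.
have map_half := ball_map_le_half (R := R) i01.
have inv_id := ball_map_inv_id (R := R) i01.
have inv_half := ball_map_inv_le_half (R := R) i01.
have transplant_cont := transplant_continuous h_cont g_cont h_onto g_into hK gK h_open.
exists f_inv; split.
- exact: transplant_cont (@ball_map_continuous R n i0 i1) map_id map_half.
- exact: transplant_cont (@ball_map_inv_continuous R n i0 i1) inv_id inv_half.
- apply: (transplantK h_onto g_into hK gK); first exact: ball_mapK.
  exact: phi_closed_ball map_id map_half.
- apply: (transplantK h_onto g_into hK gK); first exact: ball_map_invK.
  exact: phi_closed_ball inv_id inv_half.
Qed.

Lemma orbit_pt_half_ball k : half_ball R n (orbit_pt k).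
Proof.
by rewrite /half_ball /= vnorm_orbit_pt //; have /andP[_ /ltW] := orbit_radius_in R k.
Qed.

Lemma iter_transplant_ball_map k : iter k f (h (orbit_pt 0)) = h (orbit_pt k).
Proof.
elim: k => // k IH; rewrite iterS IH (transplant_h h_onto hK) ?ball_map_orbit_pt //.
exact/half_ball_sub/orbit_pt_half_ball.
Qed.

Lemma omega_lim_limit_pt q :
  (0 < q)%N -> omega_lim f (h (orbit_pt 0)) (h (limit_pt R i0 i1 q)).
Proof.
move=> q_gt0; exists (sample q); split.
  by move=> N; exists N => i /leq_trans; apply; exact: sample_ge.
under eq_fun do rewrite iter_transplant_ball_map.
apply: (h_cvg h_cont (u := fun k => orbit_pt (sample q k))).
- by move=> k; exact/half_ball_sub/orbit_pt_half_ball.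
- exact: limit_pt_closed_ball.
- exact: orbit_pt_sample_cvg.
Qed.

Lemma omega_lim_fixed y : omega_lim f (h (orbit_pt 0)) y -> f y = y.
Proof.
move=> [phi [phi_oo]]; under eq_fun do rewrite iter_transplant_ball_map.
move=> /(h_cvg_half_ball h_cont g_cont h_onto hK (fun k => orbit_pt_half_ball _)).
move=> [w w_half [-> orbit_w]].
have radius_w : orbit_radius R (phi k) @[k --> \oo] --> vnorm w.
  under eq_fun do rewrite -(vnorm_orbit_pt R i01).
  exact: continuous_cvg (@vnorm_continuous R n w) orbit_w.
have radius_half := cvg_comp _ _ (unbounded_cvgn phi_oo) (@orbit_radius_cvg R).
have w_norm : vnorm w = 1/2 := cvg_unique _ radius_w radius_half.
rewrite (transplant_h h_onto hK); last exact: half_ball_sub.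
by rewrite ball_map_id // w_norm.
Qed.

Lemma omega_lim_infinite : ~ finite_set (omega_lim f (h (orbit_pt 0))).
Proof.
apply/infiniteP; have : $|{injfun [set: nat] >-> omega_lim f (h (orbit_pt 0))}|.
  apply/injfunPex; exists (fun q => h (limit_pt R i0 i1 q.+2)).
    by move=> q _; apply: omega_lim_limit_pt.
  move=> a b _ _ /= /(congr1 g); rewrite !(hK (limit_pt_closed_ball R i01 _)).
  by move=> /(@limit_pt_inj R n i0 i1 i01 a.+2 b.+2 isT isT) [].
by case=> inj; exact: inj_card_le inj.
Qed.

End OmegaLimit.

Unset Implicit Arguments.
Theorem theorem1p5 (R : realType) (X : metricType R) (n : nat) (B : set X) :
  compact [set: X] -> (2 <= n)%N -> free_ball R n B ->
  (exists (f : X -> X) (x : X),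
      [/\ self_homeo f, ~ finite_set (omega_lim f x) &
          forall y, omega_lim f x y -> f y = y])
  /\ ~ omega_FTP X.
Proof.
move=> _ n_ge2 [h [[g [h_cont g_cont [h_onto g_into] hK gK]] h_open]].
pose i0 : 'I_n := Ordinal (ltnW n_ge2); pose i1 : 'I_n := Ordinal n_ge2.
have i01 : i0 != i1 by [].
pose f := transplant B h g (ball_map i0 i1).
have f_homeo : self_homeo f :=
  transplant_ball_map_self_homeo h_cont g_cont h_onto g_into hK gK h_open i01.
have omega_fixed := omega_lim_fixed h_cont g_cont h_onto hK i01.
have omega_infinite := omega_lim_infinite h_cont h_onto hK i01.
split; first by exists f, (h (orbit_pt R i0 i1 0)).
have [f_inv [f_cont _ _ _]] := f_homeo.
move=> /(_ f f_cont (h (orbit_pt R i0 i1 0))) ftp; apply/omega_infinite/ftp.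
by move=> y /omega_fixed f_y; exists 1%N.
Qed.
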